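(* Let $\mathcal{X},\mathcal{Y}$ be finite sets and $n\ge 1$. Let $\tilde{\Phi}_n=(\tilde{\varphi}_0,\tilde{\varphi}_2,\tilde{\psi})$ be a WAK code of blocklength $n$ with message sets $\tilde{\mathcal{M}}_0,\tilde{\mathcal{M}}_2$, and let $P_{\bar X\bar Y}\in\mathcal{P}_n(\mathcal{X}\times\mathcal{Y})$ be a joint type such that $$\log|\mathcal{T}^n_{\bar X}|\ge \log|\tilde{\mathcal{M}}_0|,$$ where $\mathcal{T}^n_{\bar X}$ is the type class of the marginal type $P_{\bar X}$. Then there exists a GW code $\Phi_n=(\varphi_0,\varphi_1,\varphi_2,\psi_1,\psi_2)$ of blocklength $n$ with message sets $\mathcal{M}_0,\mathcal{M}_1,\mathcal{M}_2$ such that \begin{align*} \log|\mathcal{M}_0| &\le \log|\tilde{\mathcal{M}}_0|+\log n+\log\log|\mathcal{X}|+2,\\ \log |\mathcal{M}_0||\mathcal{M}_1| &\le \log|\mathcal{T}^n_{\bar X}|+\log n+\log\log|\mathcal{X}|+2,\\ \log|\mathcal{M}_2| &= \log|\tilde{\mathcal{M}}_2|, \end{align*} and $$\mathrm{P}_{\mathtt{GW}}(\Phi_n\mid P_{\mathcal{T}^n_{\bar X\bar Y}})\le \mathrm{P}_{\mathtt{WAK}}(\tilde{\Phi}_n\mid P_{\mathcal{T}^n_{\bar X\bar Y}}).$$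
   Context: All logarithms are base 2. $\mathcal{P}_n(\mathcal{X}\times\mathcal{Y})$ is the set of joint types (empirical distributions) of sequences in $\mathcal{X}^n\times\mathcal{Y}^n$; for a joint type $P_{\bar X\bar Y}$, $\mathcal{T}^n_{\bar X\bar Y}$ is its type class (the set of pairs of sequences with that joint type) and $P_{\mathcal{T}^n_{\bar X\bar Y}}$ is the uniform distribution on $\mathcal{T}^n_{\bar X\bar Y}$. A WAK (Wyner–Ahlswede–Körner, source coding with a helper) code of blocklength $n$ is a triple $\tilde{\Phi}_n=(\tilde{\varphi}_0,\tilde{\varphi}_2,\tilde{\psi})$ of maps $\tilde{\varphi}_0:\mathcal{X}^n\to\tilde{\mathcal{M}}_0$, $\tilde{\varphi}_2:\mathcal{Y}^n\to\tilde{\mathcal{M}}_2$, $\tilde{\psi}:\tilde{\mathcal{M}}_0\times\tilde{\mathcal{M}}_2\to\mathcal{Y}^n$, with finite sets $\tilde{\mathcal{M}}_0,\tilde{\mathcal{M}}_2$. For $(X^n,Y^n)\sim P$, $\mathrm{P}_{\mathtt{WAK}}(\tilde{\Phi}_n\mid P)$ is the probability that $\tilde{\psi}(\tilde{\varphi}_0(X^n),\tilde{\varphi}_2(Y^n))\ne Y^n$. A GW (Gray–Wyner) code of blocklength $n$ is a tuple $\Phi_n=(\varphi_0,\varphi_1,\varphi_2,\psi_1,\psi_2)$ of maps $\varphi_i:\mathcal{X}^n\times\mathcal{Y}^n\to\mathcal{M}_i$ ($i=0,1,2$, finite sets $\mathcal{M}_i$), $\psi_1:\mathcal{M}_0\times\mathcal{M}_1\to\mathcal{X}^n$,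 $\psi_2:\mathcal{M}_0\times\mathcal{M}_2\to\mathcal{Y}^n$. For $(X^n,Y^n)\sim P$, $\mathrm{P}_{\mathtt{GW}}(\Phi_n\mid P)$ is the probability that $\big(\psi_1(\varphi_0(X^n,Y^n),\varphi_1(X^n,Y^n)),\psi_2(\varphi_0(X^n,Y^n),\varphi_2(X^n,Y^n))\big)\ne (X^n,Y^n)$. *)

From HB Require Import structures.
From mathcomp Require Import all_boot all_order all_algebra.
From mathcomp Require Import all_classical all_reals all_analysis.
Set Implicit Arguments. Unset Strict Implicit. Unset Printing Implicit Defensive.
Import Order.TTheory GRing.Theory Num.Theory.
Local Open Scope ring_scope.

(* Logarithm base 2 (MathComp-Analysis convention: ln x = 0 for x <= 0). *)
Definition log2 {R : realType} (x : R) : R := ln x / ln 2.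

Section Types.
Variables (X Y : finType) (n : nat).

Definition jtype (s : n.-tuple X * n.-tuple Y) : {ffun X * Y -> nat} :=
  [ffun ab => count_mem ab (zip s.1 s.2)].

Definition is_jtype (P : {ffun X * Y -> nat}) : Prop :=
  exists s : n.-tuple X * n.-tuple Y, jtype s = P.

Definition type_class (P : {ffun X * Y -> nat}) : {set n.-tuple X * n.-tuple Y} :=
  [set s | jtype s == P].

Definition marg1 (P : {ffun X * Y -> nat}) : {ffun X -> nat} :=
  [ffun a => (\sum_(b : Y) P (a, b))%N].

Definition xtype (x : n.-tuple X) : {ffun X -> nat} := [ffun a => count_mem a x].
Definition type_class1 (Q : {ffun X -> nat}) : {set n.-tuple X} :=
  [set x | xtype x == Q].
End Types.

Definition unif_on {R : realType} {S : finType} (A : {set S}) (s : S) : R :=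
  if s \in A then (#|A|%:R)^-1 else 0.

Definition prob {R : realType} {S : finType} (P : S -> R) (E : pred S) : R :=
  \sum_(s : S | E s) P s.

Definition P_WAK {R : realType} {X Y : finType} {n : nat} {M0 M2 : finType}
  (phi0 : n.-tuple X -> M0) (phi2 : n.-tuple Y -> M2)
  (psi : M0 -> M2 -> n.-tuple Y) (P : n.-tuple X * n.-tuple Y -> R) : R :=
  prob P (fun s => psi (phi0 s.1) (phi2 s.2) != s.2).

Definition P_GW {R : realType} {X Y : finType} {n : nat} {M0 M1 M2 : finType}
  (phi0 : n.-tuple X * n.-tuple Y -> M0)
  (phi1 : n.-tuple X * n.-tuple Y -> M1)
  (phi2 : n.-tuple X * n.-tuple Y -> M2)
  (psi1 : M0 -> M1 -> n.-tuple X) (psi2 : M0 -> M2 -> n.-tuple Y)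
  (P : n.-tuple X * n.-tuple Y -> R) : R :=
  prob P (fun s => (psi1 (phi0 s) (phi1 s), psi2 (phi0 s) (phi2 s)) != s).

From HB Require Import structures.
From mathcomp Require Import all_boot all_order all_algebra.
From mathcomp Require Import all_classical all_reals all_analysis.
From mathcomp Require Import zify lra.
Set Implicit Arguments. Unset Strict Implicit. Unset Printing Implicit Defensive.
Import Order.TTheory GRing.Theory Num.Theory.

(* Cut every fibre of the side encoder phi0t inside the marginal type class T
   into consecutive blocks of length l = |T|/|M0t| + 1.  As |T| < |M0t| l,
   fewer than 2|M0t| blocks occur, and the pair (block, offset in the block)
   identifies x in T with at most 3|T| pairs; the block also determines
   phi0t x.  Sending the block as common message, the offset as private
   message for x and phi2t y unchanged, the GW decoders recover x exactly on
   the type class and reproduce the WAK estimate of y, so they err only where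
   the WAK code errs.  The factor 4 costs 2 bits: the terms log n and
   log log |X| of the statement are nonnegative and not needed. *)

Local Open Scope nat_scope.

Lemma card_ord_le_bound (N b : nat) : #|[set q : 'I_N | q <= b]| <= b.+1.
Proof.
rewrite cardE -(size_map val) -[b.+1](size_iota 0).
apply: uniq_leq_size; first by rewrite map_inj_uniq ?enum_uniq //; apply: val_inj.
by move=> i /mapP[q]; rewrite mem_enum inE => qb ->; rewrite mem_iota.
Qed.

Section FiberBlocks.
Variables (T K : finType) (f : T -> K) (A : {set T}) (L : nat).

Definition fiber (m : K) : {set T} := [set x in A | f x == m].

Definition fiber_rank (x : T) : nat := index x (enum (fiber (f x))).

(* Block indices never exceed #|T|; the ordinal type only makes blocks a finType. *)
Definition block (x : T) : K * 'I_#|T|.+1 := (f x, inord (fiber_rank x %/ L.+1)).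

Definition offset (x : T) : 'I_L.+1 := inord (fiber_rank x %% L.+1).

Lemma mem_fiber x : x \in A -> x \in fiber (f x).
Proof. by move=> xA; rewrite inE xA eqxx. Qed.

Lemma fiber_rank_lt x : x \in A -> fiber_rank x < #|fiber (f x)|.
Proof. by move=> xA; rewrite cardE index_mem mem_enum mem_fiber. Qed.

Lemma card_fibers : \sum_m #|fiber m| = #|A|.
Proof.
rewrite -sum1_card (partition_big f xpredT) //=.
by apply: eq_bigr => m _; rewrite -sum1_card; apply: eq_bigl => x; rewrite inE.
Qed.

Lemma block_index_lt x : fiber_rank x %/ L.+1 < #|T|.+1.
Proof.
rewrite ltnS (leq_trans (leq_div _ _)) // (leq_trans _ (max_card (fiber (f x)))) //.
by rewrite cardE index_size.
Qed.

Lemma block_offset_inj :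
  {in A &, forall x y, block x = block y -> offset x = offset y -> x = y}.
Proof.
move=> x y xA yA [fxy] /(congr1 (@nat_of_ord _)).
rewrite !inordK ?block_index_lt // => qxy.
move/(congr1 (@nat_of_ord _)); rewrite !inordK ?ltn_pmod // => rxy.
have eq_rank : fiber_rank x = fiber_rank y.
  by rewrite (divn_eq (fiber_rank x) L.+1) (divn_eq (fiber_rank y) L.+1) qxy rxy.
move: eq_rank; rewrite /fiber_rank fxy; apply: (index_inj x); rewrite mem_enum.
  by rewrite -fxy mem_fiber.
exact: mem_fiber.
Qed.

Lemma card_block_image : #|block @: A| <= #|K| + #|A| %/ L.+1.
Proof.
pose B m := #|fiber m| %/ L.+1.
have sub_bound : block @: A \subset [set p : K * 'I_#|T|.+1 | p.2 <= B p.1].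
  apply/fintype.subsetP => _ /imsetP[x xA ->]; rewrite inE /= inordK ?block_index_lt //.
  by rewrite leq_div2r // ltnW // fiber_rank_lt.
apply: leq_trans (subset_leq_card sub_bound) _.
have -> : #|[set p : K * 'I_#|T|.+1 | p.2 <= B p.1]|
          = \sum_m #|[set q : 'I_#|T|.+1 | q <= B m]|.
  under [RHS]eq_bigr do rewrite -sum1_card.
  by rewrite pair_big_dep -sum1_card; apply: eq_bigl => p; rewrite !inE.
apply: leq_trans (_ : \sum_m (B m).+1 <= _).
  by apply: leq_sum => m _; apply: card_ord_le_bound.
under eq_bigr do rewrite -addn1.
rewrite big_split /= sum1_card addnC leq_add2l leq_divRL // -card_fibers big_distrl /=.
by apply: leq_sum => m _; apply: leq_divM.
Qed.
End FiberBlocks.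

Lemma fiber_code_exists (T K : finType) (f : T -> K) (A : {set T}) :
  0 < #|K| -> #|K| <= #|A| ->
  exists (c l : nat) (e0 : T -> 'I_c) (e1 : T -> 'I_l)
         (d : 'I_c -> 'I_l -> T) (g : 'I_c -> K),
    [/\ c <= 2 * #|K|, c * l <= 3 * #|A|,
        {in A, forall x, d (e0 x) (e1 x) = x} & {in A, forall x, g (e0 x) = f x}].
Proof.
move=> K_gt0 le_KA.
have [x0 x0A] : exists x0, x0 \in A by apply/card_gt0P; apply: leq_trans le_KA.
set L := #|A| %/ #|K|.
pose S := block f A L @: A.
have block_in x : x \in A -> block f A L x \in S by move=> xA; apply: imset_f.
pose e0 x := enum_rank_in (block_in x0 x0A) (block f A L x).
have e0K x : x \in A -> enum_val (e0 x) = block f A L x.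
  by move=> xA; rewrite enum_rankK_in ?block_in.
pose d j o := odflt x0 [pick y in A | (e0 y == j) && (offset f A L y == o)].
exists #|S|, L.+1, e0, (offset f A L), d, (fun j : 'I_#|S| => (enum_val j).1).
have card_S : #|S| <= #|K| + #|A| %/ L.+1 := card_block_image f A L.
have few_blocks : #|A| %/ L.+1 < #|K| by rewrite ltn_divLR // mulnC ltn_ceil.
split.
- lia.
- have := leq_divM #|A| #|K|; have := leq_divM #|A| L.+1; rewrite -/L; nia.
- move=> x xA; rewrite /d; case: pickP => [y /and3P[yA /eqP e0y /eqP oy] | /(_ x)].
    by apply: (block_offset_inj yA xA _ oy); rewrite -(e0K y yA) e0y e0K.
  by rewrite xA !eqxx.
- by move=> x xA; rewrite e0K.
Qed.

Lemma xtype_fst (X Y : finType) (n : nat) (s : n.-tuple X * n.-tuple Y) :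
  xtype s.1 = marg1 (jtype s).
Proof.
apply/ffunP => a; rewrite !ffunE; under eq_bigr => b _ do rewrite ffunE.
have sz : size s.1 <= size s.2 by rewrite !size_tuple.
rewrite -[in LHS](unzip1_zip sz).
elim: (zip _ _) => [|[a' b'] z IH] /=; first by rewrite big1.
rewrite big_split /= -IH; congr (_ + _).
have [->|neq_a] := eqVneq a' a; last by rewrite big1 // => b _; rewrite xpair_eqE (negbTE neq_a).
rewrite (bigD1 b') //= eqxx big1 // => b neq_b.
by rewrite xpair_eqE eqxx eq_sym (negbTE neq_b).
Qed.

Local Close Scope nat_scope.
Local Open Scope ring_scope.

Section Log2.
Variable R : realType.

Lemma ln2_gt0 : 0 < ln (2 : R).
Proof. by rewrite ln_gt0 // ltr1n. Qed.

Lemma ler_log2 (x y : R) : 0 < x -> 0 < y -> (log2 x <= log2 y) = (x <= y).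
Proof. by move=> x0 y0; rewrite /log2 ler_pM2r ?invr_gt0 ?ln2_gt0 // ler_ln ?posrE. Qed.

Lemma log2M (x y : R) : 0 < x -> 0 < y -> log2 (x * y) = log2 x + log2 y.
Proof. by move=> x0 y0; rewrite /log2 lnM ?posrE // mulrDl. Qed.

Lemma log2_2 : log2 (2 : R) = 1.
Proof. by rewrite /log2 divff // gt_eqF // ln2_gt0. Qed.

Lemma log2_nonpos (x : R) : x <= 0 -> log2 x = 0.
Proof. by move=> x0; rewrite /log2 ln0 ?mul0r. Qed.

Lemma log2_1 : log2 (1 : R) = 0.
Proof. by rewrite /log2 ln1 mul0r. Qed.

Lemma log2_ge0 (x : R) : 1 <= x -> 0 <= log2 x.
Proof. by move=> x1; rewrite /log2 divr_ge0 ?ln_ge0 ?ler1n. Qed.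

Lemma log2_nat_ge0 (m : nat) : 0 <= log2 (m%:R : R).
Proof.
by case: m => [|m]; [rewrite log2_nonpos | rewrite log2_ge0 // ler1n].
Qed.

Lemma log2_log2_nat_ge0 (m : nat) : 0 <= log2 (log2 (m%:R : R)).
Proof.
case: m => [|[|m]]; first by rewrite (@log2_nonpos 0) // log2_nonpos.
  by rewrite log2_1 log2_nonpos.
by apply: log2_ge0; rewrite -[leLHS]log2_2 ler_log2 ?ltr0n // ler_nat.
Qed.

Lemma log2_nat_le_add2 (a b : nat) :
  (a <= 4 * b)%N -> (0 < b)%N -> log2 (a%:R : R) <= log2 (b%:R : R) + 2.
Proof.
move=> le_ab b_gt0; case: a le_ab => [|a] le_ab.
  by rewrite log2_nonpos // addr_ge0 ?log2_nat_ge0.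
have -> : 2 = log2 (2 : R) + log2 2 by rewrite log2_2.
rewrite addrA -!log2M ?mulr_gt0 ?ltr0n // ler_log2 ?mulr_gt0 ?ltr0n //.
by rewrite -!natrM ler_nat; lia.
Qed.

End Log2.

Lemma prob_unif_on_le (R : realType) (S : finType) (A : {set S}) (E F : pred S) :
  {in A, forall s, E s -> F s} -> prob (R:=R) (unif_on A) E <= prob (unif_on A) F.
Proof.
move=> EF; rewrite /prob big_mkcond [X in _ <= X]big_mkcond /=.
apply: ler_sum => s _; rewrite /unif_on; case: ifP => Es.
  by case: ifP => sA; [rewrite (EF s sA Es) | case: ifP].
by do 2 case: ifP => // _; rewrite invr_ge0 ler0n.
Qed.

Theorem theorem1 (R : realType) (X Y : finType) (n : nat) (hn : (1 <= n)%N)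
  (M0t M2t : finType)
  (phi0t : n.-tuple X -> M0t) (phi2t : n.-tuple Y -> M2t)
  (psit : M0t -> M2t -> n.-tuple Y)
  (P : {ffun X * Y -> nat}) (hP : is_jtype n P)
  (hM : log2 (#|type_class1 n (marg1 P)|%:R : R) >= log2 (#|M0t|%:R : R)) :
  exists (M0 M1 M2 : finType)
    (phi0 : n.-tuple X * n.-tuple Y -> M0)
    (phi1 : n.-tuple X * n.-tuple Y -> M1)
    (phi2 : n.-tuple X * n.-tuple Y -> M2)
    (psi1 : M0 -> M1 -> n.-tuple X) (psi2 : M0 -> M2 -> n.-tuple Y),
    [/\ log2 (#|M0|%:R : R) <=
          log2 (#|M0t|%:R : R) + log2 (n%:R : R) + log2 (log2 (#|X|%:R : R)) + 2,
        log2 ((#|M0|%:R : R) * #|M1|%:R) <=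
          log2 (#|type_class1 n (marg1 P)|%:R : R) + log2 (n%:R : R)
          + log2 (log2 (#|X|%:R : R)) + 2,
        log2 (#|M2|%:R : R) = log2 (#|M2t|%:R : R) &
        P_GW (R:=R) phi0 phi1 phi2 psi1 psi2 (unif_on (type_class n P))
          <= P_WAK (R:=R) phi0t phi2t psit (unif_on (type_class n P))].
Proof.
case: hP => s0 s0P; set TX := type_class1 n (marg1 P).
have fst_in s : s \in type_class n P -> s.1 \in TX by rewrite !inE xtype_fst => /eqP ->.
have M0t_gt0 : (0 < #|M0t|)%N by apply/card_gt0P; exists (phi0t s0.1).
have TX_gt0 : (0 < #|TX|)%N by apply/card_gt0P; exists s0.1; rewrite fst_in ?inE ?s0P.
have M0t_le : (#|M0t| <= #|TX|)%N by rewrite -(ler_nat R) -ler_log2 ?ltr0n.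
have [c [l [e0 [e1 [d [g [c_le cl_le dK gK]]]]]]] :=
  fiber_code_exists phi0t M0t_gt0 M0t_le.
exists 'I_c, 'I_l, M2t, (e0 \o fst), (e1 \o fst), (phi2t \o snd), d, (fun j => psit (g j)).
have slack : 0 <= log2 (n%:R : R) + log2 (log2 (#|X|%:R : R)).
  by rewrite addr_ge0 ?log2_nat_ge0 ?log2_log2_nat_ge0.
rewrite !card_ord -natrM; split => //.
- have /(log2_nat_le_add2 R)/(_ M0t_gt0) : (c <= 4 * #|M0t|)%N by lia.
  lra.
- have /(log2_nat_le_add2 R)/(_ TX_gt0) : (c * l <= 4 * #|TX|)%N.
    exact: leq_trans cl_le (leq_mul (leqnSn 3) (leqnn _)).
  lra.
apply: prob_unif_on_le => -[x y] /fst_in /= xTX; apply: contraNN => /eqP wak.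
by rewrite dK // gK // wak.
Qed.
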